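(* Let $F$ be a finite field of characteristic $3$. Let $k\ge 0$ be an integer, $m=3k+1$, and $t$ an integer with $t^3\equiv 1\pmod m$ and $\gcd(m,t-1)=1$. Let $G=T_{3m}=\langle x,y\mid x^m=y^3=1,\ y^{-1}xy=x^t\rangle$ (of order $3m$), $FG$ its group algebra, and $H=\langle x\rangle$. Then $Z(\Delta(G,H))\subseteq Z(FG)$.
   Context: $\Delta(G,H)$ is the ideal of $FG$ generated by $\{h-1\mid h\in H\}$; $Z(R)$ denotes the center of a ring $R$, i.e. the set of elements of $R$ commuting with all elements of $R$. *)

From HB Require Import structures.
From mathcomp Require Import all_boot all_order all_algebra all_fingroup.
Set Implicit Arguments. Unset Strict Implicit. Unset Printing Implicit Defensive.
Import GRing.Theory.
Local Open Scope ring_scope.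

(* The group algebra F G of a finite group G (taken as the whole carrier
   type gT) is represented by functions gT -> F (coefficient vectors);
   addition is pointwise and multiplication is convolution. *)
Definition galg (F : nzRingType) (gT : finGroupType) := {ffun gT -> F}.

Definition gmul (F : nzRingType) (gT : finGroupType) (a b : {ffun gT -> F})
  : {ffun gT -> F} :=
  [ffun g => \sum_(h : gT) a h * b (h^-1 * g)%g].

Definition gelt (F : nzRingType) (gT : finGroupType) (g : gT) : {ffun gT -> F} :=
  [ffun z => (z == g)%:R].

(* Delta(G,H): the two-sided ideal of F G generated by {h - 1 | h in H},
   i.e. the set of finite sums  sum_i a_i (h_i - 1) b_i. *)
Definition Delta (F : nzRingType) (gT : finGroupType) (H : {set gT})
  (al : {ffun gT -> F}) : Prop :=
  exists n (a b : 'I_n -> {ffun gT -> F}) (s : 'I_n -> gT),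
    (forall i, s i \in H) /\
    al = \sum_(i < n) gmul (gmul (a i) (gelt F (s i) - gelt F 1%g)) (b i).

From HB Require Import structures.
From mathcomp Require Import all_boot all_order all_algebra all_fingroup.
Import GRing.Theory.
Local Open Scope ring_scope.
From mathcomp Require Import cyclic ring.
Set Implicit Arguments. Unset Strict Implicit. Unset Printing Implicit Defensive.

(* Let e = |H|^-1 sum_(h in H) h, defined since |H| = m is prime to 3.  As H
   is normal, e is central, and (h - 1) e = 0 for h in H, so every element of
   Delta(G,H) annihilates e.  Any b in FG splits as
   (b - e b) + e b with b - e b = |H|^-1 sum_(h in H) (1 - h) b in Delta(G,H).
   An element a of Delta(G,H) central in Delta(G,H) commutes with b - e b,
   while a (e b) = (a e) b = 0 and (e b) a = b (e a) = b (a e) = 0. *)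

Section GroupAlgebra.
Variables (F : comNzRingType) (gT : finGroupType).
Implicit Types (a b c f : {ffun gT -> F}) (A : {set gT}).

Definition gscale (k : F) f : {ffun gT -> F} := [ffun z => k * f z].

Lemma gscaleE k f z : gscale k f z = k * f z.
Proof. exact: ffunE. Qed.

Definition gsum A : {ffun gT -> F} := [ffun z => (z \in A)%:R].

Lemma gmulA a b c : gmul (gmul a b) c = gmul a (gmul b c).
Proof.
apply/ffunP=> g; rewrite !ffunE.
under eq_bigr do rewrite ffunE big_distrl.
rewrite exchange_big /=; apply: eq_bigr => k _.
rewrite ffunE big_distrr /= (reindex_inj (mulgI k)) /=.
by apply: eq_bigr => h _; rewrite mulKg invMg -mulgA mulrA.
Qed.

Lemma gmulDl a b c : gmul (a + b) c = gmul a c + gmul b c.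
Proof.
apply/ffunP=> g; rewrite !ffunE -big_split.
by apply: eq_bigr => h _; rewrite ffunE mulrDl.
Qed.

Lemma gmulDr a b c : gmul a (b + c) = gmul a b + gmul a c.
Proof.
apply/ffunP=> g; rewrite !ffunE -big_split.
by apply: eq_bigr => h _; rewrite ffunE mulrDr.
Qed.

Lemma gmulBl a b c : gmul (a - b) c = gmul a c - gmul b c.
Proof.
apply/ffunP=> g; rewrite !ffunE -sumrB.
by apply: eq_bigr => h _; rewrite !ffunE mulrBl.
Qed.

Lemma gmul0l a : gmul 0 a = 0.
Proof. by apply/ffunP=> g; rewrite !ffunE big1 // => h _; rewrite ffunE mul0r. Qed.

Lemma gmul0r a : gmul a 0 = 0.
Proof. by apply/ffunP=> g; rewrite !ffunE big1 // => h _; rewrite ffunE mulr0. Qed.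

Lemma gmulZl k a b : gmul (gscale k a) b = gscale k (gmul a b).
Proof.
apply/ffunP=> g; rewrite !ffunE big_distrr.
by apply: eq_bigr => h _; rewrite !ffunE -mulrA.
Qed.

Lemma gmulZr k a b : gmul a (gscale k b) = gscale k (gmul a b).
Proof.
apply/ffunP=> g; rewrite !ffunE big_distrr.
by apply: eq_bigr => h _; rewrite !ffunE mulrCA.
Qed.

Lemma gmul_suml I (r : seq I) (P : pred I) (a : I -> {ffun gT -> F}) b :
  gmul (\sum_(i <- r | P i) a i) b = \sum_(i <- r | P i) gmul (a i) b.
Proof. by elim/big_rec2: _ => [|i u v _ <-]; rewrite ?gmul0l ?gmulDl. Qed.

Lemma gmul_geltl g f : gmul (gelt F g) f = [ffun z => f (g^-1 * z)%g].
Proof.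
apply/ffunP=> z; rewrite !ffunE (bigD1 g) //= big1 ?addr0.
  by rewrite ffunE eqxx mul1r.
by move=> h /negbTE ne_hg; rewrite ffunE ne_hg mul0r.
Qed.

Lemma gmul1l f : gmul (gelt F 1%g) f = f.
Proof. by apply/ffunP=> z; rewrite gmul_geltl ffunE invg1 mul1g. Qed.

Lemma gmul_gsumE A f : gmul (gsum A) f = [ffun z => \sum_(h in A) f (h^-1 * z)%g].
Proof.
apply/ffunP=> z; rewrite !ffunE [RHS]big_mkcond /=.
by apply: eq_bigr => h _; rewrite ffunE; case: (h \in A); rewrite ?mul1r ?mul0r.
Qed.

Lemma gmul_gelt_sub1_gsum (H : {group gT}) s :
  s \in H -> gmul (gelt F s - gelt F 1%g) (gsum H) = 0.
Proof.
move=> sH; rewrite gmulBl gmul1l gmul_geltl; apply/ffunP=> z.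
by rewrite !ffunE groupMl ?groupV // subrr.
Qed.

End GroupAlgebra.

Section NormalSubgroup.
Variables (F : fieldType) (gT : finGroupType) (H : {group gT}).
Hypothesis nH : forall z, z \in 'N(H)%g.
Implicit Types (al be f : {ffun gT -> F}).

Lemma gmul_gsumC f : gmul (gsum F H) f = gmul f (gsum F H).
Proof.
apply/ffunP=> z; rewrite !ffunE.
rewrite (reindex_inj (h := fun w => z * w^-1)%g); last first.
  by move=> w1 w2 /= /mulgI /invg_inj.
apply: eq_bigr => w _; rewrite !ffunE /= invMg invgK -mulgA mulVg mulg1.
by rewrite -(memJ_norm _ (nH z)) conjgE mulgA mulKg mulrC.
Qed.

Lemma Delta_gmul_gsum al : Delta H al -> gmul al (gsum F H) = 0.
Proof.
case=> n [a [b [s [sH ->]]]]; rewrite gmul_suml big1 // => i _.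
rewrite gmulA -gmul_gsumC -gmulA (gmulA (a i)).
by rewrite gmul_gelt_sub1_gsum // gmul0r gmul0l.
Qed.

Hypothesis unit_cardH : (#|H|%:R : F) != 0.

Lemma Delta_sub_gsum be :
  Delta H (be - gscale #|H|%:R^-1 (gmul (gsum F H) be)).
Proof.
exists #|H|, (fun _ => gelt F 1%g), (fun _ => gscale (- #|H|%:R^-1) be),
  (fun i => enum_val i); split=> [i|]; first exact: enum_valP.
under eq_bigr do rewrite gmul1l gmulZr gmulBl gmul1l gmul_geltl.
apply/ffunP=> z; rewrite sum_ffunE.
under eq_bigr do rewrite gscaleE !ffunE.
rewrite gmul_gsumE !ffunE -(big_enum_val (A := mem H)
  (fun h => - #|H|%:R^-1 * (be (h^-1 * z)%g - be z))) /=.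
by rewrite -big_distrr /= sumrB sumr_const -mulr_natr; field.
Qed.

Lemma Delta_center_sub al :
  Delta H al -> (forall be, Delta H be -> gmul al be = gmul be al) ->
  forall be, gmul al be = gmul be al.
Proof.
move=> Dal cDal be; set Hbe := gmul (gsum F H) be.
have gsum_al : gmul al (gsum F H) = 0 by exact: Delta_gmul_gsum.
rewrite -(subrK (gscale #|H|%:R^-1 Hbe) be) gmulDr gmulDl.
rewrite (cDal _ (Delta_sub_gsum be)) gmulZr gmulZl; congr (_ + gscale _ _).
rewrite /Hbe -gmulA gsum_al gmul0l gmul_gsumC gmulA gmul_gsumC gsum_al.
by rewrite gmul0r.
Qed.

End NormalSubgroup.

Lemma cycle_normal_gen (gT : finGroupType) (x y : gT) n :
  (<<[set x; y]>> = [set: gT])%g -> (x ^ y = x ^+ n)%g ->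
  forall z, (z \in 'N(<[x]>))%g.
Proof.
move=> gen xy z; have : (z \in <<[set x; y]>>)%g by rewrite gen inE.
apply/subsetP; rewrite gen_subG; apply/subsetP => w; rewrite !inE.
case/orP=> /eqP ->; first by rewrite -cycleJ conjgE mulKg.
by rewrite -cycleJ xy cycleX.
Qed.

Theorem proposition3p11 (F : finFieldType) (gT : finGroupType)
    (k : nat) (t : int) (x y : gT) :
  (3 \in [pchar F])%N ->
  (t ^+ 3 == 1 %[mod (3 * k + 1)%N])%Z ->
  gcdz (3 * k + 1)%N (t - 1) = 1%N ->
  (<<[set x; y]>> = [set: gT])%g ->
  #|gT| = (3 * (3 * k + 1))%N ->
  (x ^+ (3 * k + 1) = 1)%g -> (y ^+ 3 = 1)%g ->
  (x ^ y = x ^+ `|(t %% (3 * k + 1)%N)%Z|%N)%g ->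
  forall al : {ffun gT -> F},
    Delta <[x]>%g al ->
    (forall be, Delta <[x]>%g be -> gmul al be = gmul be al) ->
    forall be : {ffun gT -> F}, gmul al be = gmul be al.
Proof.
move=> pchar3 _ _ gen _ xm _ xy.
apply: (Delta_center_sub (H := <[x]>%G)); first exact: cycle_normal_gen gen xy.
rewrite -(dvdn_pcharf pchar3); apply/negP => dvd3x.
have : (3 %| 3 * k + 1)%N by apply: dvdn_trans dvd3x _; rewrite order_dvdn xm.
by rewrite dvdn_addr ?dvdn_mulr.
Qed.
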